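(* Let $\mathbb{T}$ be the Tribonacci sequence and, for $n\ge1$, let $C(n)$ be the number of distinct nonempty words $\omega$ such that $\omega\omega\omega$ is a factor of $\mathbb{T}[1,n]$. Then $C(n)=0$ for $n\leq57$. For $n\geq58$, let $m$ be such that $t_{m-1}+2t_{m-4}\leq n<t_{m}+2t_{m-3}$; then $m\geq7$ and \begin{equation*} C(n)= \begin{cases} n-\frac{1}{2}(4t_{m-1}-t_{m-2}-3t_{m-3}+m-6),&n\leq\frac{3t_{m-1}-t_{m-3}-3}{2};\\ \frac{1}{2}(t_{m-5}+t_{m-6}-m+3),&\text{otherwise}. \end{cases} \end{equation*}
   Context: The Tribonacci sequence $\mathbb{T}=x_1x_2x_3\cdots$ is the fixed point (infinite word starting with $a$) of the substitution $\sigma(a)=ab$, $\sigma(b)=ac$, $\sigma(c)=a$ over $\{a,b,c\}$. For $n\ge1$, $\mathbb{T}[1,n]=x_1\cdots x_n$ is its prefix of length $n$. The Tribonacci numbers are $t_m=|\sigma^m(a)|$ for $m\ge0$, with $t_{-2}=0$, $t_{-1}=1$; thus $t_0=1,t_1=2,t_2=4$ and $t_m=t_{m-1}+t_{m-2}+t_{m-3}$. *)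

From HB Require Import structures.
From mathcomp Require Import all_boot all_order all_algebra.
Set Implicit Arguments. Unset Strict Implicit. Unset Printing Implicit Defensive.

Inductive letter := La | Lb | Lc.
Definition letter_eqb (x y : letter) : bool :=
  match x, y with La, La | Lb, Lb | Lc, Lc => true | _, _ => false end.
Lemma letter_eqP : Equality.axiom letter_eqb.
Proof. by case; case; constructor. Qed.
HB.instance Definition _ := hasDecEq.Build letter letter_eqP.

Definition word := seq letter.

Definition sigma_letter (x : letter) : word :=
  match x with La => [:: La; Lb] | Lb => [:: La; Lc] | Lc => [:: La] end.
Definition sigma (w : word) : word := flatten (map sigma_letter w).

Definition sigma_pow_a (m : nat) : word := iter m sigma [:: La].

Definition trib (m : nat) : nat := size (sigma_pow_a m).

(* x_i, i >= 1 : the i-th letter of the fixed point; sigma^i(a) is a prefix of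
   the fixed point of length t_i >= i+1, so it contains x_i. *)
Definition tx (i : nat) : letter := nth La (sigma_pow_a i) i.-1.

Definition Tprefix (n : nat) : word := [seq tx i | i <- iota 1 n].

(* all factors (contiguous subwords) of s; every word w with www a factor of s
   is itself a factor of s, so this list contains all candidates *)
Definition factors (s : word) : seq word :=
  flatten [seq [seq take k (drop i s) | i <- iota 0 (size s).+1]
          | k <- iota 0 (size s).+1].

Definition cube_roots (s : word) : seq word :=
  undup [seq w <- factors s | (0 < size w) && infix (w ++ w ++ w) s].

Definition C (n : nat) : nat := size (cube_roots (Tprefix n)).

Goal trib 0 = 1%N /\ trib 1 = 2%N /\ trib 2 = 4%N /\ trib 3 = 7%N. Proof. by []. Qed.
Goal Tprefix 8 = [:: La; Lb; La; Lc; La; Lb; La; La]. Proof. by []. Qed.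

From mathcomp Require Import all_boot all_order all_algebra.
From mathcomp Require Import zify lra.

Set Implicit Arguments.
Unset Strict Implicit.

(* A cube [www] in [T] is a factor of length [3|w|] with period [|w|]. Every [a]
   of [T] starts a block [sigma(x_j)], so a run of period [p] starting with [a]
   desubstitutes to a run of a smaller period [q], [p] being the length of the
   image under [sigma] of [q] consecutive letters.
   By induction on the period, a left-maximal run of period [p] and length at
   least [3p - 1] therefore has [p = t_k] and lies in an occurrence of [W_k], where
   [W_0 = aa] and [W_(k+1) = sigma(W_k) a]. Since
   [W_(j+3) = sigma^(j+3)(a)^3 V_j] and [W_k] first occurs at position
   [t_(k+2) + t_(k+1)], the cube roots of length [t_(j+3)] are the [|V_j| + 1]
   factors read there with shifts [d <= |V_j|]; the one with shift [d] first fits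
   in the prefix of length [t_(j+6) + 2 t_(j+3) + d]. Counting them with
   [2 |V_(j+1)| + 3 = t_(j+2) + t_j] gives the formula. *)

Lemma incr_locate (f : nat -> nat) n : (forall k, f k < f k.+1) -> f 0 <= n ->
  exists k, f k <= n < f k.+1.
Proof.
move=> f_incr; elim: n => [|n IH] le_n.
  by exists 0; rewrite le_n (leq_ltn_trans (leq0n _) (f_incr 0)).
case: (leqP (f 0) n) => [/IH [k /andP[le_k lt_k]] | lt_n].
  case: (ltnP n.+1 (f k.+1)) => [lt_k1|le_k1]; first by exists k; rewrite lt_k1 leqW.
  by exists k.+1; rewrite le_k1 (leq_ltn_trans _ (f_incr _)) //; lia.
by exists 0; rewrite le_n (leq_ltn_trans lt_n (f_incr 0)).
Qed.

(** * The substitution and the Tribonacci numbers *)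

Local Notation spa := sigma_pow_a.

Lemma sigma_cat u v : sigma (u ++ v) = sigma u ++ sigma v.
Proof. by rewrite /sigma map_cat flatten_cat. Qed.

Lemma sigma_cons l w : sigma (l :: w) = sigma_letter l ++ sigma w.
Proof. by []. Qed.

Lemma size_sigma_letter_gt0 l : 0 < size (sigma_letter l). Proof. by case: l. Qed.
Lemma size_sigma_letter_le2 l : size (sigma_letter l) <= 2. Proof. by case: l. Qed.

Lemma size_sigma_ge w : size w <= size (sigma w).
Proof.
elim: w => //= l w IH; rewrite sigma_cons size_cat.
by have := size_sigma_letter_gt0 l; lia.
Qed.

Lemma iter_sigma_cat m u v : iter m sigma (u ++ v) = iter m sigma u ++ iter m sigma v.
Proof. by elim: m => //= m ->; rewrite sigma_cat. Qed.

Lemma spaS m : spa m.+1 = sigma (spa m). Proof. by []. Qed.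

Lemma spaSr m : spa m.+1 = spa m ++ iter m sigma [:: Lb].
Proof. by rewrite /sigma_pow_a iterSr -iter_sigma_cat. Qed.

Lemma spaSSS m : spa m.+3 = spa m.+2 ++ spa m.+1 ++ spa m.
Proof.
rewrite spaSr; congr (_ ++ _).
rewrite iterSr (iter_sigma_cat _ [:: La] [:: Lc]); congr (_ ++ _).
by rewrite iterSr.
Qed.

Lemma spa_prefix m m' : m <= m' -> exists r, spa m' = spa m ++ r.
Proof.
move=> /subnK <-; elim: (m' - m) => [|d [r IH]]; first by exists [::]; rewrite cats0.
by rewrite addSn spaSr IH -catA; eexists.
Qed.

Lemma tribSSS m : trib m.+3 = trib m.+2 + trib m.+1 + trib m.
Proof. by rewrite /trib spaSSS !size_cat addnA. Qed.

Lemma trib_ltS m : trib m < trib m.+1.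
Proof.
rewrite /trib spaSr size_cat -[X in X < _]addn0 ltn_add2l.
elim: m => //= m IH; exact: leq_trans IH (size_sigma_ge _).
Qed.

Lemma ltn_trib_homo : {homo trib : m n / m < n}.
Proof. exact: homo_ltn ltn_trans trib_ltS. Qed.

Lemma leq_trib : {mono trib : m n / m <= n}.
Proof. exact: leq_mono ltn_trib_homo. Qed.

Lemma ltn_trib : {mono trib : m n / m < n}.
Proof. exact: leqW_mono leq_trib. Qed.

Lemma trib_inj : injective trib.
Proof. exact: incn_inj leq_trib. Qed.

Lemma trib_gt m : m < trib m.
Proof. by elim: m => // m IH; exact: leq_ltn_trans IH (trib_ltS m). Qed.

(* [tw i] is the letter of index [i] counted from 0, i.e. [x_(i+1)]. *)
Definition tw (i : nat) : letter := tx i.+1.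

Lemma nth_spa m i : i < trib m -> nth La (spa m) i = tw i.
Proof.
move=> lt_i; rewrite /tw /tx /=.
have [r1 E1] := spa_prefix (leq_maxl m i.+1).
have [r2 E2] := spa_prefix (leq_maxr m i.+1).
have lt_i' : i < size (spa i.+1) by apply: ltnW; exact: trib_gt.
by have := congr1 (nth La ^~ i) (etrans (esym E1) E2); rewrite /= !nth_cat lt_i lt_i'.
Qed.

Definition seg (i n : nat) : word := mkseq (fun r => tw (i + r)) n.

Lemma size_seg i n : size (seg i n) = n. Proof. exact: size_mkseq. Qed.

Lemma nth_seg i n r : r < n -> nth La (seg i n) r = tw (i + r).
Proof. exact: nth_mkseq. Qed.

Lemma seg_eqP i n w :
  size w = n -> (forall r, r < n -> tw (i + r) = nth La w r) -> seg i n = w.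
Proof.
move=> sz_w eq_w; apply: (@eq_from_nth _ La); rewrite size_seg // => r lt_r.
by rewrite nth_seg // eq_w.
Qed.

Lemma eq_seg a b n : seg a n = seg b n <-> forall r, r < n -> tw (a + r) = tw (b + r).
Proof.
split=> [E r lt_r | E]; first by rewrite -(nth_seg a lt_r) -(nth_seg b lt_r) E.
by apply: seg_eqP; rewrite ?size_seg // => r lt_r; rewrite nth_seg // E.
Qed.

Lemma seg0_spa m : seg 0 (trib m) = spa m.
Proof. by apply: seg_eqP => // r lt_r; rewrite nth_spa. Qed.

Lemma Tprefix_seg n : Tprefix n = seg 0 n.
Proof.
rewrite /Tprefix /seg /mkseq -[1]addn0 iotaDl -map_comp.
by apply: eq_map => r; rewrite /= add1n.
Qed.

Lemma take_seg i n N : n <= N -> take n (seg i N) = seg i n.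
Proof.
move=> le_nN; apply/esym/seg_eqP => [|r lt_r].
  by rewrite size_take size_seg; case: ltngtP le_nN; lia.
by rewrite nth_take // nth_seg //; lia.
Qed.

Lemma drop_seg i a n : drop a (seg i n) = seg (i + a) (n - a).
Proof.
apply/esym/seg_eqP => [|r lt_r]; first by rewrite size_drop size_seg.
by rewrite nth_drop nth_seg ?addnA //; lia.
Qed.

Lemma segD i a b : seg i (a + b) = seg i a ++ seg (i + a) b.
Proof.
apply: seg_eqP => [|r lt_r]; first by rewrite size_cat !size_seg.
rewrite nth_cat size_seg; case: ltnP => le_ar; first by rewrite nth_seg.
by rewrite nth_seg -?addnA ?subnKC //; lia.
Qed.

Lemma segS i n : seg i n.+1 = seg i n ++ [:: tw (i + n)].
Proof. by rewrite -addn1 segD /seg /mkseq /= addn0. Qed.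

(* [T = sigma(T)], so [T] is cut into the blocks [sigma(tw j)], starting at
   [block_start j]. *)
Definition block_start (j : nat) : nat := size (sigma (seg 0 j)).

Lemma seg0_block_start j : seg 0 (block_start j) = sigma (seg 0 j).
Proof.
have le_j : j <= trib j by exact: ltnW (trib_gt j).
have E : seg 0 j = take j (spa j) by rewrite -seg0_spa take_seg.
have split_spa := cat_take_drop j (spa j).
have le_blk : block_start j <= trib j.+1.
  by rewrite /block_start /trib spaS -split_spa sigma_cat size_cat E leq_addr.
rewrite -(take_seg 0 le_blk) seg0_spa spaS -split_spa sigma_cat -E.
by rewrite /block_start take_size_cat.
Qed.

Lemma block_start0 : block_start 0 = 0. Proof. by []. Qed.

Lemma block_startS j : block_start j.+1 = block_start j + size (sigma_letter (tw j)).
Proof. by rewrite /block_start segS sigma_cat size_cat /sigma /= cats0. Qed.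

Lemma tw_block j r : r < size (sigma_letter (tw j)) ->
  tw (block_start j + r) = nth La (sigma_letter (tw j)) r.
Proof.
move=> lt_r; have := congr1 (nth La ^~ (block_start j + r)) (seg0_block_start j.+1).
rewrite /= nth_seg; last by rewrite block_startS ltn_add2l.
rewrite segS sigma_cat nth_cat ltnNge leq_addr /= addKn.
by rewrite /sigma /= cats0.
Qed.

Lemma tw_block_start j : tw (block_start j) = La.
Proof. by have := tw_block (size_sigma_letter_gt0 (tw j)); rewrite addn0; case: (tw j). Qed.

Definition next_letter (l : letter) : letter :=
  match l with La => Lb | Lb => Lc | Lc => La end.

Lemma next_letter_inj : injective next_letter. Proof. by do 2 case. Qed.

Lemma tw_block_start1 j : tw (block_start j).+1 = next_letter (tw j).
Proof.
case E: (tw j) => /=; last by rewrite -addn1 -(tw_block_start j.+1) block_startS E.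
1,2: by have := @tw_block j 1; rewrite E addn1; apply.
Qed.

Lemma tw_block_end j : tw (block_start j.+1).-1 = next_letter (tw j).
Proof.
rewrite block_startS; case E: (tw j) => /=; last by rewrite addn1 tw_block_start.
1,2: by have := tw_block_start1 j; rewrite E /= => <-; congr tw; lia.
Qed.

Lemma block_start_ltS j : block_start j < block_start j.+1.
Proof. by rewrite block_startS -[X in X < _]addn0 ltn_add2l size_sigma_letter_gt0. Qed.

Lemma ltn_block_start_homo : {homo block_start : m n / m < n}.
Proof. exact: homo_ltn ltn_trans block_start_ltS. Qed.

Lemma leq_block_start : {mono block_start : m n / m <= n}.
Proof. exact: leq_mono ltn_block_start_homo. Qed.

Lemma ltn_block_start : {mono block_start : m n / m < n}.
Proof. exact: leqW_mono leq_block_start. Qed.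

Lemma block_start_addn j d : block_start j + d <= block_start (j + d).
Proof.
elim: d => [|d IH]; first by rewrite !addn0.
by rewrite !addnS; exact: leq_ltn_trans IH (block_start_ltS _).
Qed.

Lemma leq_block_start_id j : j <= block_start j.
Proof. by have := block_start_addn 0 j; rewrite block_start0. Qed.

Lemma block_locate s : exists j, block_start j <= s < block_start j.+1.
Proof. exact: incr_locate block_start_ltS _. Qed.

Lemma block_start_inside s j : block_start j <= s < block_start j.+1 ->
  s = block_start j \/ s = (block_start j).+1 /\ size (sigma_letter (tw j)) = 2.
Proof.
rewrite block_startS; have := size_sigma_letter_le2 (tw j).
case: (ltngtP s (block_start j)) => [||<-]; [lia | move=> lt_js le2 lt_s | by left].
by right; lia.
Qed.

Lemma tw_eq_a s : tw s = La -> exists j, s = block_start j.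
Proof.
have [j /block_start_inside [->|[-> sz_j]]] := block_locate s; first by exists j.
by rewrite tw_block_start1; move: sz_j; case: (tw j).
Qed.

Lemma tw_neq_a s : tw s != La -> [/\ 0 < s, tw s.-1 = La & tw s.+1 = La].
Proof.
have [j /block_start_inside [->|[-> sz_j]]] := block_locate s.
  by rewrite tw_block_start.
by split; rewrite //= ?tw_block_start // -addn2 -sz_j -block_startS tw_block_start.
Qed.

Lemma block_startSS j : block_start j + 3 <= block_start j.+2.
Proof.
rewrite !block_startS -addnA leq_add2l.
have := size_sigma_letter_gt0 (tw j.+1); case E: (tw j) => /= pos; [lia | lia |].
have nea : tw j != La by rewrite E.
by have [_ _ ->] := tw_neq_a nea.
Qed.

Lemma no_aaa s : ~ [/\ tw s = La, tw s.+1 = La & tw s.+2 = La].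
Proof.
case=> /tw_eq_a [j ->]; rewrite tw_block_start1; case E: (tw j) => // _.
have -> : (block_start j).+2 = (block_start j.+1).+1 by rewrite block_startS E addn1.
have nea : tw j != La by rewrite E.
by rewrite tw_block_start1; have [_ _ ->] := tw_neq_a nea.
Qed.

(** * Occurrences and desubstitution *)

Definition occurs (w : word) (i : nat) : Prop :=
  forall r, r < size w -> tw (i + r) = nth La w r.

Lemma occurs_cons l w j : occurs (l :: w) j <-> tw j = l /\ occurs w j.+1.
Proof.
split=> [occ_lw | [tw_j occ_w] [|r] lt_r /=]; last by rewrite addnS occ_w.
  split=> [|r lt_r]; first by have := occ_lw 0 isT; rewrite addn0.
  by have := occ_lw r.+1 lt_r; rewrite addnS.
by rewrite addn0.
Qed.

Lemma occurs_block_start w j n : occurs w j -> n <= size w ->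
  block_start (j + n) = block_start j + size (sigma (take n w)).
Proof.
move=> occ_w; elim: n => [|n IH] le_n; first by rewrite take0 /= !addn0.
rewrite addnS block_startS IH ?(ltnW le_n) // (take_nth La) // -cats1 sigma_cat size_cat.
by rewrite occ_w // /sigma /= cats0 addnA.
Qed.

(* The appended [La] is the first letter of the next block; it makes occurrences
   of [w] at [j] and of [sigma_a w] at [block_start j] correspond exactly. *)
Definition sigma_a (w : word) : word := sigma w ++ [:: La].

Lemma occurs_sigma_a w j : occurs w j -> occurs (sigma_a w) (block_start j).
Proof.
elim: w j => [|l w IH] j; first by move=> _ [|r] //= _; rewrite addn0 tw_block_start.
move=> /occurs_cons [<- occ_w] r; rewrite /sigma_a sigma_cons -catA size_cat => lt_r.
rewrite nth_cat; case: ltnP => [lt_rl|le_r]; first exact: tw_block.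
have := IH _ occ_w (r - size (sigma_letter (tw j))).
by rewrite block_startS -addnA subnKC //; apply; rewrite /sigma_a; lia.
Qed.

Lemma nth0_sigma_a w : nth La (sigma_a w) 0 = La.
Proof. by case: w => [|[] w]. Qed.

Lemma nth1_sigma_a l w : nth La (sigma_a (l :: w)) 1 = next_letter l.
Proof. by case: l => //; case: w => [|[] w]. Qed.

Lemma occurs_sigma_aK w j : occurs (sigma_a w) (block_start j) -> occurs w j.
Proof.
elim: w j => [|l w IH] j occ_w //.
have tw_j : tw j = l.
  apply: next_letter_inj; rewrite -tw_block_start1 -(nth1_sigma_a l w) -addn1 occ_w //.
  by rewrite /sigma_a !size_cat /= addnC; have := size_sigma_letter_gt0 l; lia.
apply/occurs_cons; split => //; apply: IH => r lt_r.
have := occ_w (size (sigma_letter l) + r).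
rewrite /sigma_a sigma_cons -catA size_cat nth_cat.
rewrite [X in if X then _ else _]ltnNge leq_addr addKn /=.
by rewrite block_startS tw_j addnA; apply; rewrite ltn_add2l.
Qed.

(** * The words [W_k = run_word k] and [V_j = run_tail j] *)

Definition run_word (k : nat) : word := iter k sigma_a [:: La; La].
Definition run_tail (j : nat) : word := iter j sigma_a [::].

Lemma run_wordS k : run_word k.+1 = sigma_a (run_word k). Proof. by []. Qed.

Lemma size_run_wordS k : size (run_word k.+1) = (size (sigma (run_word k))).+1.
Proof. by rewrite run_wordS /sigma_a size_cat addn1. Qed.

Lemma leq_size_run_word : {homo (fun k => size (run_word k)) : m n / m <= n}.
Proof.
apply: homo_leq leqnn leq_trans _ => k.
by rewrite /= size_run_wordS; exact: leqW (size_sigma_ge _).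
Qed.

Lemma sigma_cons_a w : w != [::] -> exists w', sigma w = La :: w'.
Proof. by case: w => // - [] w _; eexists. Qed.

Lemma run_word_border k : exists Y Z,
  [/\ run_word k = spa k ++ Y, run_word k = Y ++ Z & Z != [::]].
Proof.
elim: k => [|k [Y [Z [E1 E2 nZ]]]]; first by exists [:: La], [:: La].
have [Z' EZ] := sigma_cons_a nZ.
exists (sigma_a Y), (Z' ++ [:: La]); split.
- by rewrite run_wordS E1 /sigma_a sigma_cat -catA.
- by rewrite run_wordS {1}E2 /sigma_a sigma_cat EZ -!catA.
- by rewrite -size_eq0 size_cat addn1.
Qed.

Lemma run_word_prefix k : exists Y, run_word k = spa k ++ Y.
Proof. by have [Y [_ [-> _ _]]] := run_word_border k; exists Y. Qed.

Lemma nth_run_word_period k r : r + trib k < size (run_word k) ->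
  nth La (run_word k) (r + trib k) = nth La (run_word k) r.
Proof.
have [Y [Z [E1 E2 _]]] := run_word_border k.
have sz : size (run_word k) = trib k + size Y by rewrite {1}E1 size_cat.
rewrite sz addnC ltn_add2l => lt_r; rewrite {1}E1 nth_cat ltnNge leq_addr addKn /=.
by rewrite E2 nth_cat lt_r.
Qed.

Lemma run_wordSSS j : run_word j.+3 = spa j.+3 ++ spa j.+3 ++ spa j.+3 ++ run_tail j.
Proof.
elim: j => [|j IH] //.
by rewrite /run_word iterS -/(run_word _) IH /sigma_a !sigma_cat -!catA.
Qed.

Lemma run_tailSSS j : run_tail j.+3 = spa j.+3 ++ run_tail j.
Proof.
elim: j => [|j IH] //.
by rewrite /run_tail iterS -/(run_tail _) IH /sigma_a sigma_cat -catA.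
Qed.

Lemma size_run_wordSSS j : size (run_word j.+3) = 3 * trib j.+3 + size (run_tail j).
Proof. by rewrite run_wordSSS !size_cat /trib; lia. Qed.

Lemma size_run_tailSSS j : size (run_tail j.+3) = trib j.+3 + size (run_tail j).
Proof. by rewrite run_tailSSS size_cat. Qed.

Lemma size_run_tail_lt j : size (run_tail j) < trib j.+1.
Proof.
suff : [/\ size (run_tail j) < trib j.+1, size (run_tail j.+1) < trib j.+2
         & size (run_tail j.+2) < trib j.+3] by case.
elim: j => [|j [H1 H2 H3]] //; split => //.
by rewrite size_run_tailSSS (tribSSS j.+1); lia.
Qed.

(* The factor [tw i ... tw (e - 1)] has period [p]. *)
Definition periodic (p i e : nat) : Prop :=
  forall s, i <= s -> s + p < e -> tw s = tw (s + p).

Definition left_maximal (p i : nat) : Prop := i = 0 \/ tw i.-1 <> tw (i.-1 + p).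

Lemma left_maximal_extension p i e : periodic p i e ->
  exists2 i', i' <= i & periodic p i' e /\ left_maximal p i'.
Proof.
elim: i => [|i IH] per; first by exists 0 => //; split => //; left.
case: (tw i =P tw (i + p)) => [eq_i|neq_i]; last by exists i.+1 => //; split => //; right.
have [|i' le_i' lmax] := IH; last by exists i'; first exact: leqW.
by move=> s; rewrite leq_eqVlt => /predU1P [<- //|]; apply: per.
Qed.

Lemma run_start_a p i e : 1 < p -> periodic p i e -> left_maximal p i -> i + p < e ->
  tw i = La.
Proof.
move=> p_gt1 per [-> _|lmax lt_e]; first exact: (tw_block_start 0).
case: (eqVneq (tw i) La) => // /[dup] ne_a /tw_neq_a [i_gt0 tw_i1 _].
rewrite (per i) // in ne_a; have [_ tw_ip1 _] := tw_neq_a ne_a.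
by case: lmax; rewrite tw_i1 -tw_ip1; congr tw; lia.
Qed.

Lemma run_period1 i e : periodic 1 i e -> i + 3 <= e.+1 ->
  e - i <= size (run_word 0) /\ occurs (run_word 0) i.
Proof.
move=> per long; have tw_i1 : tw i = tw i.+1 by rewrite -addn1 per //; lia.
have tw_i : tw i = La.
  by case: (eqVneq (tw i) La) => // /tw_neq_a [_ _]; rewrite -tw_i1.
split; last by move=> [|[|r]] //= _; rewrite ?addn0 ?addn1 -?tw_i1.
case: (leqP e i.+2) => [|lt_e]; first by rewrite /=; lia.
exfalso; apply: (@no_aaa i); split; rewrite -?tw_i1 //.
by rewrite -(addn1 i.+1) -per -?tw_i1 //; lia.
Qed.

(* A run of period [p] starting at the block boundary [block_start j], such that
   [block_start j + p] is the boundary [block_start (j + q)], is the image of a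
   run of period [q] starting at [j]. *)
Section Desubstitution.

Variables (j q p e : nat).
Hypothesis shift_j : block_start (j + q) = block_start j + p.
Hypothesis per : periodic p (block_start j) e.

Lemma tw_shift u : j <= u -> (block_start u).+1 + p < e ->
  block_start (u + q) = block_start u + p -> tw u = tw (u + q).
Proof.
move=> le_ju lt_e shift_u; apply: next_letter_inj.
by rewrite -!tw_block_start1 shift_u -addSn per // ltnW // ltnS leq_block_start.
Qed.

Lemma block_start_shift r : (block_start r).+1 + p < e ->
  forall u, j <= u <= r.+1 -> block_start (u + q) = block_start u + p.
Proof.
move=> lt_e u /andP[]; elim: u => [|u IH] le_ju le_ur.
  by move: le_ju; rewrite leqn0 => /eqP <-.
case: (eqVneq j u.+1) => [<- //|ne_ju].
have le_ju' : j <= u by lia.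
have lt_e' : (block_start u).+1 + p < e.
  by apply: leq_ltn_trans lt_e; rewrite leq_add2r ltnS leq_block_start; lia.
have shift_u := IH le_ju' (ltnW le_ur).
by rewrite addSn !block_startS shift_u -tw_shift // addnAC.
Qed.

Lemma desubst_period_lt : 1 < p -> q < p.
Proof.
move=> p_gt1; case: (ltnP 1 q) => [q_gt1|]; last by lia.
have := block_start_addn j.+2 (q - 2); have := block_startSS j.
have -> : j.+2 + (q - 2) = j + q by lia.
by rewrite shift_j; lia.
Qed.

Lemma desubst_left_maximal : left_maximal p (block_start j) -> left_maximal q j.
Proof.
case: (posnP j) => [-> _|j_gt0 [start0|lmax]]; [by left | | right => eq_j].
  by have := leq_block_start_id j; rewrite start0; lia.
have end_j := tw_block_end j.-1; have end_jq := tw_block_end (j.-1 + q).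
rewrite prednK // in end_j; rewrite -addSn prednK // shift_j in end_jq.
apply: lmax; rewrite end_j eq_j -end_jq; congr tw.
by have := leq_block_start_id j; lia.
Qed.

Lemma periodic_desubst r : (block_start r).+1 + p < e -> periodic q j (r.+1 + q).
Proof.
move=> lt_e s le_js lt_s; apply: tw_shift => //.
  by apply: leq_ltn_trans lt_e; rewrite leq_add2r ltnS leq_block_start; lia.
by apply: block_start_shift lt_e _ _; lia.
Qed.

Lemma desubst_long r : 1 < p -> (block_start r).+1 + p < e ->
  block_start j + 3 * p <= e.+1 -> e <= block_start r.+1 + p + 1 -> j + 2 * q <= r.+2.
Proof.
move=> p_gt1 lt_e long le_e; rewrite leqNgt; apply/negP => short.
case: (ltnP r.+1 (j + q)) => [lt_rq|le_qr].
  by move: lt_rq; rewrite -ltn_block_start shift_j; lia.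
have shift_r := block_start_shift lt_e (u := r.+1 - q).
rewrite subnK in shift_r; last by lia.
rewrite shift_r in le_e; last by lia.
have := block_startSS (r.+1 - q); have : (r.+1 - q).+2 <= j + q by lia.
by rewrite -leq_block_start shift_j; lia.
Qed.

End Desubstitution.

Lemma block_start_run_word k j : occurs (run_word k) j ->
  block_start (j + trib k) = block_start j + trib k.+1
  /\ block_start (j + size (run_word k)) = block_start j + size (sigma (run_word k)).
Proof.
move=> occ; have [Y E] := run_word_prefix k; split.
  rewrite (occurs_block_start occ); last by rewrite E size_cat leq_addr.
  by rewrite E take_size_cat.
by rewrite (occurs_block_start occ) // take_size.
Qed.

Theorem run_structure p i e : 0 < p -> periodic p i e -> left_maximal p i ->
  i + 3 * p <= e.+1 ->
  exists k, [/\ p = trib k, e - i <= size (run_word k) & occurs (run_word k) i].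
Proof.
elim/ltn_ind: p i e => p IHp i e p_gt0 per lmax long.
case: (ltnP 1 p) => [p_gt1|p_le1]; last first.
  have p1 : p = 1 by lia.
  by subst p; exists 0; have [] := run_period1 per long.
have tw_i : tw i = La by apply: run_start_a p_gt1 per lmax _; lia.
have [j i_j] := tw_eq_a tw_i.
have [j' ip_j'] : exists j', i + p = block_start j' by apply: tw_eq_a; rewrite -per //; lia.
subst i; have lt_jj' : j < j' by rewrite -ltn_block_start -ip_j'; lia.
set q := j' - j; have q_gt0 : 0 < q by lia.
have shift_j : block_start (j + q) = block_start j + p by rewrite subnKC // ltnW.
have [r /andP[le_r lt_r]] := block_locate (e - p - 2).
have lt_e : (block_start r).+1 + p < e by lia.
have le_e : e <= block_start r.+1 + p + 1 by lia.
have per_q := periodic_desubst shift_j per lt_e.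
have lmax_q := desubst_left_maximal shift_j lmax.
have long_q : j + 3 * q <= (r.+1 + q).+1.
  by have := desubst_long shift_j per p_gt1 lt_e long le_e; lia.
have [k [Eq len occ]] := IHp _ (desubst_period_lt shift_j p_gt1) _ _ q_gt0 per_q lmax_q long_q.
have [shift_k shift_W] := block_start_run_word occ.
exists k.+1; split; last exact: occurs_sigma_a.
- by move: shift_k; rewrite -Eq shift_j => /addnI.
have le_jr : j <= r.+1 by apply: ltnW; rewrite -ltn_block_start; lia.
have le_W : block_start (r.+1 + q) <= block_start (j + size (run_word k)).
  by rewrite leq_block_start; lia.
rewrite shift_W (block_start_shift shift_j per lt_e) in le_W; last by rewrite le_jr leqnn.
by rewrite size_run_wordS; lia.
Qed.

(** * Cubes *)

Lemma periodic_sub p i e i' e' : periodic p i e -> i <= i' -> e' <= e -> periodic p i' e'.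
Proof. by move=> per le_i le_e s le_s lt_s; apply: per; lia. Qed.

Lemma periodic_iter p i e s c : periodic p i e -> i <= s -> s + c * p < e ->
  tw (s + c * p) = tw s.
Proof.
move=> per le_s; elim: c => [|c IH] lt_e; first by rewrite addn0.
have -> : s + c.+1 * p = s + c * p + p by rewrite mulSn; lia.
by rewrite -per ?IH //; lia.
Qed.

Lemma periodic_run_word k i : occurs (run_word k) i ->
  periodic (trib k) i (i + size (run_word k)).
Proof.
move=> occ s le_s lt_s; have -> : s = i + (s - i) by lia.
by rewrite -addnA !occ ?nth_run_word_period //; lia.
Qed.

(* [run_word k] first occurs at [first_pos k]. *)
Definition first_pos (k : nat) : nat := trib k.+2 + trib k.+1.

Lemma block_start_first_pos k : block_start (first_pos k) = first_pos k.+1.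
Proof.
have le_F : first_pos k <= trib k.+3 by rewrite /first_pos tribSSS; lia.
have E : seg 0 (first_pos k) = spa k.+2 ++ spa k.+1.
  by rewrite -(take_seg 0 le_F) seg0_spa spaSSS catA take_size_cat // size_cat.
by rewrite /block_start E sigma_cat -!spaS size_cat.
Qed.

Lemma occurs_run_word_first k : occurs (run_word k) (first_pos k).
Proof.
elim: k => [|k IH]; first by case=> [|[|r]].
by rewrite -block_start_first_pos run_wordS; apply: occurs_sigma_a.
Qed.

Lemma first_pos_min k i : occurs (run_word k) i -> first_pos k <= i.
Proof.
elim: k i => [|k IH] i occ.
  have := occ 0 isT; have := occ 1 isT; rewrite addn0 addn1 /=.
  by case: (leqP 6 i) => //; case: i occ => [|[|[|[|[|[|i]]]]]].
have [j i_j] : exists j, i = block_start j.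
  by apply: tw_eq_a; rewrite -[i]addn0 occ // run_wordS ?nth0_sigma_a // size_cat addn1.
subst i; rewrite -block_start_first_pos leq_block_start; apply: IH.
exact: occurs_sigma_aK.
Qed.

Definition cube (i L : nat) : Prop := periodic L i (i + 3 * L).

Lemma size_run_word_small k : k <= 2 -> size (run_word k) < 3 * trib k.
Proof. by case: k => [|[|[|k]]]. Qed.

Lemma size_run_word_le j : size (run_word j.+2) <= 3 * trib j.+3.
Proof.
case: j => [|j] //; rewrite size_run_wordSSS (tribSSS j.+1).
by have := size_run_tail_lt j; lia.
Qed.

Definition cube_root (j d : nat) : word := seg (first_pos j.+3 + d) (trib j.+3).

Lemma cube_classify i L : 0 < L -> cube i L -> exists j d,
  [/\ L = trib j.+3, d <= size (run_tail j), first_pos j.+3 + d <= i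
    & seg i L = cube_root j d].
Proof.
move=> L_gt0 cube_i; have [i' le_i' [per lmax]] := left_maximal_extension cube_i.
have [k [EL len occ]] := run_structure L_gt0 per lmax ltac:(lia).
have k_gt2 : 2 < k by case: (leqP k 2) => // /size_run_word_small; lia.
have [j Ek] : exists j, k = j.+3 by exists (k - 3); lia.
subst k; have len' := size_run_wordSSS j.
exists j, (i - i'); split => //; first lia.
  by have := first_pos_min occ; lia.
rewrite /cube_root -EL; apply/eq_seg => r lt_r; have -> : i + r = i' + (i - i' + r) by lia.
by rewrite -addnA occ ?occurs_run_word_first //; lia.
Qed.

Lemma cube_first_pos j d : d <= size (run_tail j) -> cube (first_pos j.+3 + d) (trib j.+3).
Proof.
move=> le_d; apply: periodic_sub (periodic_run_word (occurs_run_word_first (k := j.+3))) _ _.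
  exact: leq_addr.
by rewrite size_run_wordSSS; lia.
Qed.

Lemma cube_root_neq j d1 d2 : d1 < d2 -> d2 <= size (run_tail j) ->
  cube_root j d1 != cube_root j d2.
Proof.
rewrite /cube_root; set F := first_pos j.+3; set t := trib j.+3 => lt_d le_d.
apply/negP => /eqP/eq_seg eq_r.
have per := periodic_run_word (occurs_run_word_first (k := j.+3)).
rewrite size_run_wordSSS -/F -/t in per.
have t_gt0 : 0 < t by exact: leq_ltn_trans (trib_gt _).
have shift r : r < 3 * t -> tw (F + d1 + r) = tw (F + d2 + r).
  move=> lt_r; have E := divn_eq r t.
  have split_r d : F + d + r = F + d + r %% t + r %/ t * t by lia.
  by rewrite !split_r !(periodic_iter per) ?eq_r ?ltn_mod //; lia.
have per_d : periodic (d2 - d1) (F + d1) (F + d2 + 3 * t).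
  move=> s le_s lt_s; have -> : s = F + d1 + (s - (F + d1)) by lia.
  by rewrite shift; [congr tw | ]; lia.
have lt_dt : d2 - d1 < t.
  have : trib j.+1 <= t by rewrite /t leq_trib; lia.
  by have := size_run_tail_lt j; lia.
have [i' le_i' [per' lmax]] := left_maximal_extension per_d.
have [k [Ed len _]] := run_structure (ltac:(lia) : 0 < d2 - d1) per' lmax ltac:(lia).
have lt_k : k < j.+3 by rewrite -ltn_trib -Ed.
by have := leq_size_run_word (lt_k : k <= j.+2); have := size_run_word_le j; lia.
Qed.

Lemma cube_root_inj j1 d1 j2 d2 : d1 <= size (run_tail j1) -> d2 <= size (run_tail j2) ->
  cube_root j1 d1 = cube_root j2 d2 -> j1 = j2 /\ d1 = d2.
Proof.
move=> le_d1 le_d2 eq_r.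
have ej : j1 = j2 by have := congr1 size eq_r; rewrite !size_seg => /trib_inj; lia.
subst j2; split=> //; case: (ltngtP d1 d2) => // lt_d.
- by move: (cube_root_neq lt_d le_d2); rewrite eq_r eqxx.
- by move: (cube_root_neq lt_d le_d1); rewrite eq_r eqxx.
Qed.

(** * Counting *)

Lemma cube_seg3 i L : cube i L <-> seg i (3 * L) = seg i L ++ seg i L ++ seg i L.
Proof.
have -> : seg i (3 * L) = seg i L ++ seg (i + L) L ++ seg (i + 2 * L) L.
  have -> : 3 * L = L + (L + L) by lia.
  by rewrite !segD -addnA addnn -mul2n.
split=> [cube_i | /eqP].
  have e1 : seg (i + L) L = seg i L.
    by apply/eq_seg => r lt_r; rewrite [RHS]cube_i; [congr tw | |]; lia.
  have e2 : seg (i + 2 * L) L = seg i L.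
    by rewrite -e1; apply/eq_seg => r lt_r; rewrite [RHS]cube_i; try congr tw; lia.
  by rewrite e1 e2.
rewrite !eqseq_cat ?size_seg // => /and3P [_ /eqP/esym/eq_seg e1 /eqP/esym/eq_seg e2].
move=> s le_s lt_s.
case: (ltnP s (i + L)) => lt_sL.
  by rewrite -[in LHS](subnKC le_s) e1; try congr tw; lia.
have -> : s = i + L + (s - i - L) by lia.
by rewrite -e1 ?e2; try congr tw; lia.
Qed.

Lemma infix_seg0 (u : word) n :
  infix u (seg 0 n) <-> exists2 i, i + size u <= n & seg i (size u) = u.
Proof.
split=> [/infixP [a [b E]] | [i le_n E]].
  have sz_n : n = size a + size u + size b by rewrite -(size_seg 0 n) E !size_cat addnA.
  exists (size a); first by rewrite sz_n leq_addr.
  have := congr1 (fun s => take (size u) (drop (size a) s)) E.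
  rewrite /= drop_size_cat // take_size_cat // drop_seg add0n take_seg; first exact: id.
  by rewrite sz_n -addnA addKn leq_addr.
apply/infixP; exists (seg 0 i), (seg (i + size u) (n - i - size u)).
rewrite {1}(_ : n = i + (size u + (n - i - size u))); last by lia.
by rewrite !segD add0n E.
Qed.

Lemma infix_factors (w s : word) : infix w s -> w \in factors s.
Proof.
move=> /infixP [a [b E]]; apply/flatten_mapP; exists (size w).
  by rewrite mem_iota /= ltnS E !size_cat addnCA; exact: leq_addr.
apply/mapP; exists (size a); first by rewrite mem_iota /= ltnS E size_cat; exact: leq_addr.
by rewrite E drop_size_cat // take_size_cat.
Qed.

Definition cube_end (k : nat) : nat := first_pos k + 3 * trib k.

(* Number of cube roots of length [trib j.+3] in a prefix of length [n]. *)
Definition nroots (j n : nat) : nat := minn (size (run_tail j)).+1 (n.+1 - cube_end j.+3).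

Lemma nrootsP j n d :
  reflect (d <= size (run_tail j) /\ cube_end j.+3 + d <= n) (d < nroots j n).
Proof. by rewrite /nroots leq_min; apply: (iffP andP); lia. Qed.

Lemma cube_end_gt k : k < cube_end k.
Proof. by have := trib_gt k; rewrite /cube_end; lia. Qed.

Lemma cube_root_infix j n d : d < nroots j n ->
  infix (cube_root j d ++ cube_root j d ++ cube_root j d) (seg 0 n).
Proof.
move=> /nrootsP [le_d le_n]; apply/infix_seg0; exists (first_pos j.+3 + d).
  by rewrite !size_cat size_seg; move: le_n; rewrite /cube_end; lia.
have -> : size (cube_root j d ++ cube_root j d ++ cube_root j d) = 3 * trib j.+3.
  by rewrite !size_cat size_seg; lia.
exact/cube_seg3/cube_first_pos.
Qed.

Lemma mem_cube_roots n w : (w \in cube_roots (Tprefix n)) =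
  (w \in [seq cube_root j d | j <- iota 0 n, d <- iota 0 (nroots j n)]).
Proof.
rewrite /cube_roots mem_undup mem_filter Tprefix_seg.
apply/idP/allpairsPdep => [/andP[/andP[w_gt0 /infix_seg0 [i le_n E]] _]|].
  have sz3 : size (w ++ w ++ w) = 3 * size w by rewrite !size_cat; lia.
  rewrite sz3 in le_n E.
  have seg_w : seg i (size w) = w.
    by have := congr1 (take (size w)) E; rewrite take_seg ?take_size_cat //; lia.
  have cube_i : cube i (size w) by apply/cube_seg3; rewrite E seg_w.
  have [j [d [EL le_d le_i eq_w]]] := cube_classify w_gt0 cube_i.
  have le_dn : cube_end j.+3 + d <= n by rewrite /cube_end; lia.
  exists j, d; rewrite !mem_iota -eq_w seg_w; split=> //; last exact/nrootsP.
  by have := cube_end_gt j.+3; lia.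
move=> [j [d [_ /[!mem_iota] /= lt_d ->]]]; have inf := cube_root_infix lt_d.
rewrite inf size_seg (leq_ltn_trans _ (trib_gt _)) //=.
by apply: infix_factors; apply: infix_trans inf; exact: prefix_infix.
Qed.

Lemma uniq_cube_roots n :
  uniq [seq cube_root j d | j <- iota 0 n, d <- iota 0 (nroots j n)].
Proof.
apply: allpairs_uniq_dep => [||p1 p2]; rewrite ?iota_uniq //.
  by move=> j _; exact: iota_uniq.
move=> /allpairsPdep [j1 [d1 [_ /[!mem_iota] /= /nrootsP [le1 _] ->]]].
move=> /allpairsPdep [j2 [d2 [_ /[!mem_iota] /= /nrootsP [le2 _] ->]]] /=.
by move=> /(cube_root_inj le1 le2) [-> ->].
Qed.

Lemma C_sum n : C n = \sum_(0 <= j < n) nroots j n.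
Proof.
rewrite /C (perm_size (uniq_perm (undup_uniq _) (uniq_cube_roots n) (mem_cube_roots n))).
rewrite size_allpairs_dep sumnE big_map /index_iota subn0.
by apply: eq_bigr => j _; rewrite size_iota.
Qed.

Lemma cube_endE k : cube_end k = trib k.+3 + 2 * trib k.
Proof. by rewrite /cube_end /first_pos tribSSS; lia. Qed.

Lemma cube_end_ltS k : cube_end k < cube_end k.+1.
Proof. by rewrite !cube_endE; have := trib_ltS k; have := trib_ltS k.+3; lia. Qed.

Lemma leq_cube_end : {mono cube_end : m n / m <= n}.
Proof. exact: leq_mono (homo_ltn ltn_trans cube_end_ltS). Qed.

Lemma ltn_cube_end : {mono cube_end : m n / m < n}.
Proof. exact: leqW_mono leq_cube_end. Qed.

Lemma cube_end3 : cube_end 3 = 58. Proof. by []. Qed.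

Lemma size_run_tail_closed j : 2 * size (run_tail j.+1) + 3 = trib j.+2 + trib j.
Proof.
suff : [/\ 2 * size (run_tail j.+1) + 3 = trib j.+2 + trib j,
           2 * size (run_tail j.+2) + 3 = trib j.+3 + trib j.+1 &
           2 * size (run_tail j.+3) + 3 = trib j.+4 + trib j.+2] by case.
elim: j => [|j [H1 H2 H3]] //; split => //.
rewrite size_run_tailSSS; have := tribSSS j; have := tribSSS j.+1.
by have := tribSSS j.+2; lia.
Qed.

Lemma cube_end_gap j : cube_end j.+3 + size (run_tail j) < cube_end j.+4.
Proof.
rewrite !cube_endE; have := size_run_tail_lt j.
have : trib j.+1 <= trib j.+4.+1 by rewrite leq_trib; lia.
by have := tribSSS j.+4; have := trib_ltS j.+3; lia.
Qed.

Lemma sum_run_tail_closed J :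
  2 * \sum_(0 <= j < J) (size (run_tail j)).+1 + J + 3 = trib J.+1 + trib J.
Proof.
elim: J => [|J IH]; first by rewrite big_geq.
rewrite big_nat_recr //= mulnDr; case: J IH => [|J] IH; first by rewrite big_geq.
by have := size_run_tail_closed J; have := tribSSS J; lia.
Qed.

Lemma C_bracket J n : cube_end J.+3 <= n < cube_end J.+4 ->
  C n = \sum_(0 <= j < J) (size (run_tail j)).+1
        + minn (size (run_tail J)).+1 (n.+1 - cube_end J.+3).
Proof.
move=> /andP[le_n lt_n]; have lt_Jn : J < n by have := cube_end_gt J.+3; lia.
have zero : \sum_(J.+1 <= j < n) nroots j n = 0.
  rewrite big_nat_cond big1 // => j /andP[/andP[lt_Jj _] _].
  have : cube_end J.+4 <= cube_end j.+3 by rewrite leq_cube_end.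
  by rewrite /nroots => le_c; have -> : n.+1 - cube_end j.+3 = 0 by lia.
rewrite C_sum (big_cat_nat (n := J.+1)) // zero /= addn0 big_nat_recr //=.
congr (_ + _); apply: eq_big_nat => j /andP[_ lt_jJ]; apply/minn_idPl.
have : cube_end j.+4 <= cube_end J.+3 by rewrite leq_cube_end.
by have := cube_end_gap j; lia.
Qed.

Lemma C_small n : n < cube_end 3 -> C n = 0.
Proof.
move=> lt_n; rewrite C_sum big1 // => j _; rewrite /nroots.
have le_c : cube_end 3 <= cube_end j.+3 by rewrite leq_cube_end.
by have -> : n.+1 - cube_end j.+3 = 0 by lia.
Qed.

Lemma cube_end_threshold J :
  2 * (cube_end J.+3 + size (run_tail J)) + 3 + trib J.+4 = 3 * trib J.+3.+3.
Proof.
rewrite cube_endE; case: J => [|J] //; have := size_run_tail_closed J.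
have := tribSSS J.+4; have := tribSSS J.+3; have := tribSSS J.+2; have := tribSSS J.+1.
by have := tribSSS J; lia.
Qed.

Lemma C_closed_form J n : cube_end J.+3 <= n < cube_end J.+4 ->
  if n <= cube_end J.+3 + size (run_tail J)
  then 2 * C n + 4 * trib J.+3.+3 + J + 1 = 2 * n + trib J.+3.+2 + 3 * trib J.+4
  else 2 * C n + J + 4 = trib J.+2 + trib J.+1.
Proof.
move=> bracket; rewrite (C_bracket bracket); move: bracket => /andP[le_n _].
have sum_J := sum_run_tail_closed J; have sum_J1 := sum_run_tail_closed J.+1.
rewrite big_nat_recr //= in sum_J1; case: leqP => le_th.
  have -> : minn (size (run_tail J)).+1 (n.+1 - cube_end J.+3) = n.+1 - cube_end J.+3.
    by apply/minn_idPr; lia.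
  rewrite cube_endE in le_n *; have := tribSSS J; have := tribSSS J.+1.
  by have := tribSSS J.+2; have := tribSSS J.+3; lia.
have -> : minn (size (run_tail J)).+1 (n.+1 - cube_end J.+3) = (size (run_tail J)).+1.
  by apply/minn_idPl; lia.
by lia.
Qed.

Lemma bracket_cube_end m n : 4 <= m ->
  (trib (m - 1) + 2 * trib (m - 4) <= n < trib m + 2 * trib (m - 3))
  = (cube_end (m - 4) <= n < cube_end (m - 3)).
Proof.
move=> m_ge4; rewrite !cube_endE.
by have [-> ->] : (m - 4).+3 = m - 1 /\ (m - 3).+3 = m by split; lia.
Qed.

Import Order.TTheory GRing.Theory Num.Theory.
Local Open Scope ring_scope.

Lemma C_rat m n : (7 <= m)%N -> (cube_end (m - 4) <= n < cube_end (m - 3))%N ->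
  (C n)%:R =
    ((if n%:R <= (3 * (trib (m - 1))%:R - (trib (m - 3))%:R - 3) / 2 :> rat
      then n%:R - (4 * (trib (m - 1))%:R - (trib (m - 2))%:R
                   - 3 * (trib (m - 3))%:R + m%:R - 6) / 2
      else ((trib (m - 5))%:R + (trib (m - 6))%:R - m%:R + 3) / 2) : rat).
Proof.
move=> m_ge7; have [J ->] : exists J, m = J.+3.+4 by exists (m - 7)%N; lia.
rewrite !subSS !subn0 => bracket.
have thr := congr1 (GRing.natmul (1 : rat)) (cube_end_threshold J).
have -> : (3 * (trib J.+3.+3)%:R - (trib J.+4)%:R - 3) / 2 =
          (cube_end J.+3 + size (run_tail J))%:R :> rat by lra.
rewrite ler_nat; have := C_closed_form bracket.
by case: leqP => _ /(congr1 (GRing.natmul (1 : rat))); lra.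
Qed.

Theorem theoremC :
  (forall n : nat, (1 <= n <= 57)%N -> C n = 0%N) /\
  (forall n : nat, (58 <= n)%N ->
     (exists m : nat, (4 <= m)%N /\
        (trib (m - 1) + 2 * trib (m - 4) <= n < trib m + 2 * trib (m - 3))%N) /\
     (forall m : nat, (4 <= m)%N ->
        (trib (m - 1) + 2 * trib (m - 4) <= n < trib m + 2 * trib (m - 3))%N ->
        (7 <= m)%N /\
        (C n)%:R =
          ((if n%:R <= (3 * (trib (m - 1))%:R - (trib (m - 3))%:R - 3) / 2 :> rat
           then n%:R - (4 * (trib (m - 1))%:R - (trib (m - 2))%:R
                        - 3 * (trib (m - 3))%:R + m%:R - 6) / 2
           else ((trib (m - 5))%:R + (trib (m - 6))%:R - m%:R + 3) / 2) : rat))).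
Proof.
split=> [n /andP[_ le_n] | n ge_n]; first by apply: C_small; rewrite cube_end3 ltnS.
split=> [|m m_ge4].
  have [|k bracket] := incr_locate cube_end_ltS (n := n); first by apply: leq_trans ge_n.
  by exists k.+4; rewrite bracket_cube_end // !subSS !subn0.
rewrite bracket_cube_end // => bracket; have m_ge7 : (7 <= m)%N.
  have := leq_ltn_trans ge_n (proj2 (andP bracket)).
  by rewrite -cube_end3 ltn_cube_end; lia.
by split=> //; apply: C_rat.
Qed.
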